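(* Let $B>0$, $\beta>0$, and $\mathcal{G}\subseteq\mathbb{R}^d$. Then $\mathcal{M}_{B,\beta}$ is $\max_{\boldsymbol g\in\mathcal{G}}\sum_{i=1}^d\log\left(1+\frac{1}{\beta+\mathrm{dist}(g_i,\mathcal{C}_B)}\right)$-differentially private on $\mathcal{G}$.
   Context: For $B>0$, $\mathrm{clip}\{g,B\}=\max\{-B,\min\{B,g\}\}$. The randomized compressor $\mathcal{M}_{B,\beta}:\mathbb{R}^d\to\{-1,1\}^d$ acts independently on each coordinate: $[\mathcal{M}_{B,\beta}]_i(\boldsymbol g)=1$ with probability $\frac{B+\beta+\mathrm{clip}\{g_i,B\}}{2B+2\beta}$ and $=-1$ otherwise, where $g_i$ is the $i$-th coordinate of $\boldsymbol g$. Let $\mathcal{C}_B=(-\infty,-B)\cup(B,\infty)$ and for $g\in\mathbb{R}$ let $\mathrm{dist}(g,\mathcal{C}_B)=\inf_{g'\in\mathcal{C}_B}|g-g'|$. A randomized algorithm $\mathcal{M}$ is $\epsilon$-differentially private on $\mathcal{G}$ if $\Pr[\mathcal{M}(x)\in\mathcal{S}]\le e^{\epsilon}\Pr[\mathcal{M}(y)\in\mathcal{S}]$ for all subsets $\mathcal{S}$ of its range and all $x,y\in\mathcal{G}$ with $\|x-y\|_1\le1$. *)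

From HB Require Import structures.
From mathcomp Require Import all_boot all_order all_algebra.
From mathcomp Require Import all_classical all_reals all_analysis.
Set Implicit Arguments. Unset Strict Implicit. Unset Printing Implicit Defensive.
Import Order.TTheory GRing.Theory Num.Theory.
Local Open Scope classical_set_scope.
Local Open Scope ring_scope.

Definition clip {R : realType} (g B : R) : R := Num.max (- B) (Num.min B g).

Definition prob_plus {R : realType} (B beta g : R) : R :=
  (B + beta + clip g B) / (2 * B + 2 * beta).

(* Outputs in {-1,1}^d are encoded as {ffun 'I_d -> bool}, true <-> +1. *)
Definition output d := {ffun 'I_d -> bool}.

(* Pr[M_{B,beta}(g) = s]: coordinates are independent. *)
Definition M_pmf {R : realType} (d : nat) (B beta : R) (g : 'I_d -> R)
  (s : output d) : R :=
  \prod_(i < d) (if s i then prob_plus B beta (g i) else 1 - prob_plus B beta (g i)).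

Definition M_prob {R : realType} (d : nat) (B beta : R) (g : 'I_d -> R)
  (S : {set output d}) : R :=
  \sum_(s in S) M_pmf B beta g s.

Definition C_set {R : realType} (B : R) : set R := [set x | x < - B \/ B < x].

Definition dist_C {R : realType} (B g : R) : R :=
  inf [set `|g - g'| | g' in C_set B].

Definition l1_dist {R : realType} (d : nat) (x y : 'I_d -> R) : R :=
  \sum_(i < d) `|x i - y i|.

Definition M_is_DP {R : realType} (d : nat) (B beta : R) (eps : R)
  (G : set ('I_d -> R)) : Prop :=
  forall (S : {set output d}) (x y : 'I_d -> R), G x -> G y ->
    l1_dist x y <= 1 ->
    M_prob B beta x S <= expR eps * M_prob B beta y S.

Definition priv_cost {R : realType} (d : nat) (B beta : R) (g : 'I_d -> R) : R :=
  \sum_(i < d) ln (1 + (beta + dist_C B (g i))^-1).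

(* max over G, read as the supremum (equals the max whenever it is attained) *)
Definition priv_budget {R : realType} (d : nat) (B beta : R)
  (G : set ('I_d -> R)) : R :=
  sup [set priv_cost B beta g | g in G].

From HB Require Import structures.
From mathcomp Require Import all_boot all_order all_algebra.
From mathcomp Require Import all_classical all_reals all_analysis.
From mathcomp Require Import ring lra.
Import Order.TTheory GRing.Theory Num.Theory.
Local Open Scope classical_set_scope.
Local Open Scope ring_scope.

Set Implicit Arguments.
Unset Strict Implicit.

(* Each coordinate outputs +1 with probability (B + beta + clip g_i)/(2B + 2beta)
   and -1 with probability (B + beta - clip g_i)/(2B + 2beta).  Clipping is
   1-Lipschitz, so moving g_i by at most 1 changes either numerator by at most 1,
   while both numerators are at least beta + B - |clip g_i| >= beta + dist(g_i, C_B).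
   Hence, for an input x with |x_i - g_i| <= 1, each coordinate probability at x
   is at most 1 + 1/(beta + dist(g_i, C_B)) times the one at g; multiplying over
   coordinates gives the factor exp (priv_cost g) <= exp (priv_budget G). *)

Lemma clip_cases {R : realType} (B g : R) : 0 <= B ->
  [\/ clip g B = - B /\ g <= - B,
      clip g B = g /\ - B <= g <= B
    | clip g B = B /\ B <= g].
Proof.
move=> B_ge0; rewrite /clip; case: (leP g B) => [gB|Bg].
  by case: (leP (- B) g) => h; [apply: Or32 | apply: Or31; rewrite ltW].
by apply: Or33; rewrite ltW // max_r // (le_trans _ B_ge0) // oppr_le0.
Qed.

Lemma clip_lipschitz {R : realType} (B x y : R) : 0 <= B ->
  `|clip x B - clip y B| <= `|x - y|.
Proof.
move=> B_ge0; have := ler_norm (x - y); have := ler_norm (y - x).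
rewrite distrC ler_norml => ? ?.
case: (clip_cases x B_ge0) => [[-> ?]|[-> /andP[? ?]]|[-> ?]];
  case: (clip_cases y B_ge0) => [[-> ?]|[-> /andP[? ?]]|[-> ?]];
  by apply/andP; split; lra.
Qed.

Lemma dist_C_ge0 {R : realType} (B g : R) : 0 <= dist_C B g.
Proof.
apply: lb_le_inf; last by move=> _ [g' _ <-].
by exists `|g - (B + 1)|, (B + 1) => //; right; lra.
Qed.

Lemma dist_C_le_norm {R : realType} (B g g' : R) :
  C_set B g' -> dist_C B g <= `|g - g'|.
Proof.
move=> Cg'; apply: ge_inf; last by exists g'.
by exists 0 => _ [? _ <-].
Qed.

Lemma dist_C_le_clip {R : realType} (B g : R) : 0 <= B ->
  dist_C B g <= B - `|clip g B|.
Proof.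
move=> B_ge0; apply/ler_addgt0Pr => e e_gt0.
case: (clip_cases g B_ge0) => [[-> ?]|[-> /andP[? ?]]|[-> ?]].
- apply: le_trans (dist_C_le_norm g (g' := g - e) _) _; first by left; lra.
  by rewrite normrN (ger0_norm B_ge0) ger0_norm; lra.
- have [g_ge0|g_lt0] := leP 0 g.
    apply: le_trans (dist_C_le_norm g (g' := B + e) _) _; first by right; lra.
    by rewrite (ger0_norm g_ge0) ler0_norm; lra.
  apply: le_trans (dist_C_le_norm g (g' := - B - e) _) _; first by left; lra.
  by rewrite (ltr0_norm g_lt0) ger0_norm; lra.
- apply: le_trans (dist_C_le_norm g (g' := g + e) _) _; first by right; lra.
  by rewrite (ger0_norm B_ge0) ler0_norm; lra.
Qed.

Lemma norm_le_l1_dist {R : realType} d (x y : 'I_d -> R) (i : 'I_d) :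
  `|x i - y i| <= l1_dist x y.
Proof. by rewrite /l1_dist (bigD1 i) //= lerDl sumr_ge0. Qed.

Section Mechanism.
Variables (R : realType) (B beta : R).
Hypotheses (B_ge0 : 0 <= B) (beta_gt0 : 0 < beta).

Let denom_gt0 : 0 < 2 * B + 2 * beta.
Proof. by rewrite ltr_wpDl ?mulr_ge0 ?mulr_gt0. Qed.

Lemma beta_dist_gt0 (g : R) : 0 < beta + dist_C B g.
Proof. exact: ltr_wpDr (dist_C_ge0 B g) beta_gt0. Qed.

Definition coord_pmf (g : R) (b : bool) : R :=
  if b then prob_plus B beta g else 1 - prob_plus B beta g.

Lemma M_pmfE d (g : 'I_d -> R) (s : output d) :
  M_pmf B beta g s = \prod_(i < d) coord_pmf (g i) (s i).
Proof. by []. Qed.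

Lemma coord_pmfE (g : R) (b : bool) :
  coord_pmf g b =
  (B + beta + (if b then clip g B else - clip g B)) / (2 * B + 2 * beta).
Proof.
by rewrite /coord_pmf /prob_plus; case: b => //; field; exact: lt0r_neq0.
Qed.

Lemma coord_pmf_ge_dist (g : R) (b : bool) :
  (beta + dist_C B g) / (2 * B + 2 * beta) <= coord_pmf g b.
Proof.
rewrite coord_pmfE ler_pM2r ?invr_gt0 //.
have := dist_C_le_clip g B_ge0; have := ler_norm (clip g B).
have := ler_norm (- clip g B); rewrite normrN.
by case: b => *; lra.
Qed.

Lemma coord_pmf_ge0 (g : R) (b : bool) : 0 <= coord_pmf g b.
Proof.
apply: le_trans (coord_pmf_ge_dist g b).
by rewrite divr_ge0 // ltW ?beta_dist_gt0.
Qed.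

Lemma coord_pmf_ratio (x y : R) (b : bool) : `|x - y| <= 1 ->
  coord_pmf x b <= (1 + (beta + dist_C B y)^-1) * coord_pmf y b.
Proof.
move=> xy_le1.
have step : coord_pmf x b <= coord_pmf y b + (2 * B + 2 * beta)^-1.
  rewrite !coord_pmfE -[X in _ <= _ + X]mul1r -mulrDl ler_pM2r ?invr_gt0 //.
  have := le_trans (clip_lipschitz x y B_ge0) xy_le1; rewrite ler_norml.
  by case: b => /andP[? ?]; lra.
apply: le_trans step _; rewrite [X in _ <= X]mulrDl mul1r lerD2l.
rewrite -(ler_pM2l (beta_dist_gt0 y)) mulrA divff ?gt_eqF ?beta_dist_gt0 // mul1r.
exact: coord_pmf_ge_dist.
Qed.

Lemma one_add_inv_gt0 (g : R) : 0 < 1 + (beta + dist_C B g)^-1.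
Proof. by rewrite addr_gt0 ?invr_gt0 ?beta_dist_gt0. Qed.

Lemma expR_priv_cost d (g : 'I_d -> R) :
  expR (priv_cost B beta g) = \prod_(i < d) (1 + (beta + dist_C B (g i))^-1).
Proof.
by rewrite /priv_cost expR_sum; apply: eq_bigr => i _; rewrite lnK ?posrE ?one_add_inv_gt0.
Qed.

Lemma priv_cost_le d (g : 'I_d -> R) : priv_cost B beta g <= d%:R / beta.
Proof.
rewrite /priv_cost -[d in d%:R]card_ord -sum1_card natr_sum mulr_suml.
apply: ler_sum => i _; rewrite mul1r.
apply: le_trans (le_ln1Dx _) _; first by have := one_add_inv_gt0 (g i); lra.
by rewrite lef_pV2 ?posrE ?beta_dist_gt0 // lerDl dist_C_ge0.
Qed.

Lemma priv_cost_le_budget d (G : set ('I_d -> R)) (g : 'I_d -> R) :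
  G g -> priv_cost B beta g <= priv_budget B beta G.
Proof.
move=> Gg; apply: ub_le_sup; last by exists g.
by exists (d%:R / beta) => _ [h _ <-]; exact: priv_cost_le.
Qed.

Lemma M_pmf_ratio d (x y : 'I_d -> R) (s : output d) : l1_dist x y <= 1 ->
  M_pmf B beta x s <= expR (priv_cost B beta y) * M_pmf B beta y s.
Proof.
move=> xy_le1; rewrite expR_priv_cost !M_pmfE -big_split /=.
apply: ler_prod => i _.
by rewrite coord_pmf_ge0 coord_pmf_ratio // (le_trans (norm_le_l1_dist _ _ i)).
Qed.

End Mechanism.

Theorem theorem3 (R : realType) (d : nat) (B beta : R) (G : set ('I_d -> R)) :
  0 < B -> 0 < beta ->
  M_is_DP B beta (priv_budget B beta G) G.
Proof.
move=> /ltW B_ge0 beta_gt0 S x y _ Gy xy_le1.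
rewrite /M_prob mulr_sumr; apply: ler_sum => s _.
apply: le_trans (M_pmf_ratio B_ge0 beta_gt0 s xy_le1) _.
rewrite ler_wpM2r ?ler_expR ?priv_cost_le_budget //.
by rewrite M_pmfE; apply: prodr_ge0 => i _; exact: coord_pmf_ge0.
Qed.
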